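(* Let $P$ be a closed term of sort $(k,l)$ and $Q$ a closed term of sort $(l,m)$. (i) If $P\mathrel{;}Q\xrightarrow[\vec b]{\vec a}R$ then $R=P'\mathrel{;}Q'$ for some terms $P',Q'$, and there exist $n,p\ge0$, words $\vec d_1,\dots,\vec d_n,\vec c,\vec e_1,\dots,\vec e_p\in L^l$ and terms $P_0=P,P_1,\dots,P_n$, $P'_0,\dots,P'_p=P'$, $Q_0=Q,Q_1,\dots,Q_n$, $Q'_0,\dots,Q'_p=Q'$ such that $P_{i-1}\xrightarrow[\vec d_i]{\vec\iota}P_i$ and $Q_{i-1}\xrightarrow[\vec\iota]{\vec d_i}Q_i$ for $1\le i\le n$, $P_n\xrightarrow[\vec c]{\vec a}P'_0$ and $Q_n\xrightarrow[\vec b]{\vec c}Q'_0$, and $P'_{j-1}\xrightarrow[\vec e_j]{\vec\iota}P'_j$ and $Q'_{j-1}\xrightarrow[\vec\iota]{\vec e_j}Q'_j$ for $1\le j\le p$. (ii) If $P\otimes Q\xrightarrow[\vec b]{\vec a}R$ (here $P:(k,l)$, $Q:(l,m)$ arbitrary closed terms) then $R=P'\otimes Q'$ and there exist transitions $P\xrightarrow[\vec b_1]{\vec a_1}P'$ and $Q\xrightarrow[\vec b_2]{\vec a_2}Q'$ with $\vec a=\vec a_1\vec a_2$ and $\vec b=\vec b_1\vec b_2$.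
   Context: Wire calculus. Fix a set $\Sigma$ of signals and a symbol $\iota\notin\Sigma$ (''no signal''); $L=\Sigma\cup\{\iota\}$; $\vec\iota$ denotes a word consisting only of $\iota$'s (of the appropriate length). Prefix strings are words over the atoms: signal variables $x$, binders $\lambda x$, $\iota$, and constants $\sigma\in\Sigma$. Terms: $P::= Y \mid P\mathrel{;}P\mid P\otimes P\mid \frac{u}{v}.P\mid P+P\mid \mu Y{:}\tau.P$, with $Y$ process variables, $u,v$ prefix strings, $\tau$ a sort $(k,l)$. In $\frac{u}{v}.P$ the variables $x$ with $\lambda x$ in $uv$ are bound in $P$ (set $bd$), others occurring in $uv$ are free ($fr$). Sorting: $Y$ has its declared sort; $P:(k,n),R:(n,l)\Rightarrow P\mathrel{;}R:(k,l)$; $P:(k,l),Q:(m,n)\Rightarrow P\otimes Q:(k+m,l+n)$; $P:\tau$ under $Y{:}\tau'$ gives $\mu Y{:}\tau'.P:\tau$; if $|u|=k,|v|=l$, $fr\cap bd=\varnothing$, $fr$ in context and $P:(k,l)$ then $\frac{u}{v}.P:(k,l)$; $P,Q:\tau\Rightarrow P+Q:\tau$. Only closed terms are considered, up to renaming of bound variables. Transitions $P\xrightarrow[\vec b]{\vec a}Q$ (upper label $\vec a\in L^k$, lower $\vec b\in L^l$ for $P:(k,l)$) are generated by: (Refl) $P\xrightarrow[\vec\iota]{\vec\iota}P$; ($\iota$L) $P\xrightarrow[\vec\iota]{\vec\iota}R$, $R\xrightarrow[\vec b]{\vec a}Q$ give $P\xrightarrow[\vec b]{\vec a}Q$; ($\iota$R)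 $P\xrightarrow[\vec b]{\vec a}R$, $R\xrightarrow[\vec\iota]{\vec\iota}Q$ give $P\xrightarrow[\vec b]{\vec a}Q$; (Cut) $P\xrightarrow[\vec c]{\vec a}Q$, $R\xrightarrow[\vec b]{\vec c}S$ give $P\mathrel{;}R\xrightarrow[\vec b]{\vec a}Q\mathrel{;}S$; (Ten) $P\xrightarrow[\vec b]{\vec a}Q$, $R\xrightarrow[\vec d]{\vec c}S$ give $P\otimes R\xrightarrow[\vec b\vec d]{\vec a\vec c}Q\otimes S$; (Pref) for each $\sigma:bd\to L$, $\frac{u}{v}.P\xrightarrow[v|_\sigma]{u|_\sigma}P|_\sigma$; (Rec) $P[\mu Y.P/Y]\xrightarrow[\vec b]{\vec a}Q$ gives $\mu Y.P\xrightarrow[\vec b]{\vec a}Q$; ($+\iota$) $P\xrightarrow[\vec\iota]{\vec\iota}Q$, $R\xrightarrow[\vec\iota]{\vec\iota}S$ give $P+R\xrightarrow[\vec\iota]{\vec\iota}Q+S$; ($+$L/$+$R) $P\xrightarrow[\vec b]{\vec a}Q$ with $\vec a\vec b$ not all $\iota$ gives $P+R\xrightarrow[\vec b]{\vec a}Q$ and $R+P\xrightarrow[\vec b]{\vec a}Q$. *)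

From Stdlib Require Import List Arith.
Import ListNotations.
Set Implicit Arguments.

Section Wire.
Variable Sigma : Type.

(* L = Sigma + {iota}; iota is represented by None. *)
Definition lab : Type := option Sigma.
Definition word : Type := list lab.
Definition iota : lab := None.
Definition iotas (n : nat) : word := repeat None n.
Definition all_iota (w : word) : Prop := Forall (fun x => x = None) w.

Definition sort : Type := (nat * nat)%type.

(* prefix atoms: signal variable x, binder \lambda x, value in L
   (AVal None = iota, AVal (Some s) = constant s) *)
Inductive atom : Type :=
| AVar (x : nat)
| ABind (x : nat)
| AVal (a : lab).

Inductive term : Type :=
| TVar (Y : nat)
| TSeq (P R : term)
| TTen (P R : term)
| TPre (u v : list atom) (P : term)
| TSum (P R : term)
| TMu (Y : nat) (tau : sort) (P : term).

Definition atom_bd (a : atom) : list nat :=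
  match a with ABind x => [x] | _ => [] end.
Definition atom_fr (a : atom) : list nat :=
  match a with AVar x => [x] | _ => [] end.

Definition bd (u v : list atom) : list nat := flat_map atom_bd (u ++ v).
Definition fr (u v : list atom) : list nat := flat_map atom_fr (u ++ v).

Definition memb (x : nat) (s : list nat) : bool := existsb (Nat.eqb x) s.

Fixpoint lookup (Y : nat) (G : list (nat * sort)) : option sort :=
  match G with
  | [] => None
  | (Z, t) :: G' => if Nat.eqb Y Z then Some t else lookup Y G'
  end.

(* sorting judgment: G = process-variable context, X = signal variables in scope *)
Inductive wt : list (nat * sort) -> list nat -> term -> sort -> Prop :=
| wt_var G X Y tau : lookup Y G = Some tau -> wt G X (TVar Y) tau
| wt_seq G X P R k n l :
    wt G X P (k, n) -> wt G X R (n, l) -> wt G X (TSeq P R) (k, l)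
| wt_ten G X P Q k l m n :
    wt G X P (k, l) -> wt G X Q (m, n) -> wt G X (TTen P Q) (k + m, l + n)
| wt_mu G X Y P tau :
    wt ((Y, tau) :: G) X P tau -> wt G X (TMu Y tau P) tau
| wt_pre G X u v P :
    (forall x, In x (fr u v) -> ~ In x (bd u v)) ->
    (forall x, In x (fr u v) -> In x X) ->
    wt G (bd u v ++ X) P (length u, length v) ->
    wt G X (TPre u v P) (length u, length v)
| wt_sum G X P Q tau :
    wt G X P tau -> wt G X Q tau -> wt G X (TSum P Q) tau.

Definition closed (P : term) (tau : sort) : Prop := wt [] [] P tau.

Definition asub (s : nat -> option lab) (a : atom) : atom :=
  match a with
  | AVar x => match s x with Some c => AVal c | None => AVar x end
  | _ => a
  end.

Fixpoint ssub (s : nat -> option lab) (P : term) : term :=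
  match P with
  | TVar Y => TVar Y
  | TSeq P1 P2 => TSeq (ssub s P1) (ssub s P2)
  | TTen P1 P2 => TTen (ssub s P1) (ssub s P2)
  | TSum P1 P2 => TSum (ssub s P1) (ssub s P2)
  | TMu Y tau P1 => TMu Y tau (ssub s P1)
  | TPre u v P1 =>
      let s' := fun x => if memb x (bd u v) then None else s x in
      TPre (map (asub s') u) (map (asub s') v) (ssub s' P1)
  end.

Definition inst (sg : nat -> lab) (u : list atom) : word :=
  map (fun a => match a with AVar x => sg x | ABind x => sg x | AVal c => c end) u.

Definition restr (u v : list atom) (sg : nat -> lab) (P : term) : term :=
  ssub (fun x => if memb x (bd u v) then Some (sg x) else None) P.

(* process substitution P[R/Y] (R closed, so no capture) *)
Fixpoint psub (Y : nat) (R : term) (P : term) : term :=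
  match P with
  | TVar Z => if Nat.eqb Z Y then R else TVar Z
  | TSeq P1 P2 => TSeq (psub Y R P1) (psub Y R P2)
  | TTen P1 P2 => TTen (psub Y R P1) (psub Y R P2)
  | TSum P1 P2 => TSum (psub Y R P1) (psub Y R P2)
  | TPre u v P1 => TPre u v (psub Y R P1)
  | TMu Z tau P1 => if Nat.eqb Z Y then TMu Z tau P1 else TMu Z tau (psub Y R P1)
  end.

(* transitions  P --a/b--> Q  (upper label a, lower label b) *)
Inductive step : term -> word -> word -> term -> Prop :=
| st_refl P k l : closed P (k, l) -> step P (iotas k) (iotas l) P
| st_iotaL P R Q i j a b :
    all_iota i -> all_iota j -> step P i j R -> step R a b Q -> step P a b Q
| st_iotaR P R Q i j a b :
    all_iota i -> all_iota j -> step P a b R -> step R i j Q -> step P a b Q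
| st_cut P Q R S a b c :
    step P a c Q -> step R c b S -> step (TSeq P R) a b (TSeq Q S)
| st_ten P Q R S a b c d :
    step P a b Q -> step R c d S -> step (TTen P R) (a ++ c) (b ++ d) (TTen Q S)
| st_pref u v P (sg : nat -> lab) :
    step (TPre u v P) (inst sg u) (inst sg v) (restr u v sg P)
| st_rec Y tau P a b Q :
    step (psub Y (TMu Y tau P) P) a b Q -> step (TMu Y tau P) a b Q
| st_sumiota P Q R S i j :
    all_iota i -> all_iota j -> step P i j Q -> step R i j S ->
    step (TSum P R) i j (TSum Q S)
| st_sumL P Q R a b :
    step P a b Q -> ~ all_iota (a ++ b) -> step (TSum P R) a b Q
| st_sumR P Q R a b :
    step P a b Q -> ~ all_iota (a ++ b) -> step (TSum R P) a b Q.

End Wire.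

(* A transition of [P ; Q] or [P (x) Q] is built from Cut (resp. Ten), Refl and the two
   iota-composition rules, so both parts follow by induction on the derivation.  By subject
   reduction an all-iota label of a closed term of sort (k,l) is exactly iota^k / iota^l;
   hence every iota-step of [P ; Q] that is composed before or after the main Cut step
   decomposes, by the induction hypothesis, into idle steps of P and Q synchronised on a
   middle word, and these extend the two idle chains.  For the tensor, an all-iota label of
   [a1 ++ a2] is all-iota on both halves, so iota-composition is performed componentwise. *)
From Stdlib Require Import List Arith Lia.
Import ListNotations.
Set Implicit Arguments.

Section LabelledPath.
Variables (A B : Type) (R : A -> B -> A -> Prop).

Inductive labelled_path : A -> A -> Prop :=
| lpath_refl x : labelled_path x x
| lpath_step x b y z : R x b y -> labelled_path y z -> labelled_path x z.

Lemma lpath_trans x y z : labelled_path x y -> labelled_path y z -> labelled_path x z.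
Proof.
  induction 1 as [|x b y' y Hxy _ IH]; intros Hyz; auto.
  eapply lpath_step; eauto.
Qed.

Lemma lpath_indexed (b0 : B) x y : labelled_path x y ->
  exists n (lbl : nat -> B) (st : nat -> A),
    st 0 = x /\ st n = y /\
    (forall i, 1 <= i <= n -> R (st (i - 1)) (lbl i) (st i)).
Proof.
  induction 1 as [x|x b y z Hxy _ [n [lbl [st [H0 [Hn Hsteps]]]]]].
  - exists 0, (fun _ => b0), (fun _ => x). repeat split; auto; lia.
  - exists (S n), (fun i => match i with 0 | 1 => b | S j => lbl j end),
      (fun i => match i with 0 => x | S j => st j end).
    split; [reflexivity|]. split; [exact Hn|].
    intros [|[|j]] Hi; [lia| |].
    + cbn. rewrite H0. exact Hxy.
    + replace (S (S j) - 1) with (S j) by lia.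
      specialize (Hsteps (S j) ltac:(lia)). now replace (S j - 1) with j in Hsteps by lia.
Qed.

End LabelledPath.

Section Wire.
Variable Sigma : Type.

Lemma memb_In x s : memb x s = true <-> In x s.
Proof.
  unfold memb. rewrite existsb_exists. split.
  - intros [y [Hy E]]. apply Nat.eqb_eq in E. now subst.
  - intros H. exists x. split; auto. apply Nat.eqb_refl.
Qed.

Lemma bd_asub (s : nat -> option (lab Sigma)) (w : list (atom Sigma)) :
  flat_map (@atom_bd Sigma) (map (asub s) w) = flat_map (@atom_bd Sigma) w.
Proof.
  induction w as [|[x|x|c] w IH]; simpl; rewrite ?IH; auto.
  now destruct (s x).
Qed.

Lemma fr_asub (s : nat -> option (lab Sigma)) (w : list (atom Sigma)) x :
  In x (flat_map (@atom_fr Sigma) (map (asub s) w)) ->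
  In x (flat_map (@atom_fr Sigma) w) /\ s x = None.
Proof.
  induction w as [|[y|y|c] w IH]; simpl; [tauto| | |]; intros H.
  - destruct (s y) eqn:E; simpl in H.
    + destruct (IH H); auto.
    + destruct H as [<-|H]; auto. destruct (IH H); auto.
  - destruct (IH H); auto.
  - destruct (IH H); auto.
Qed.

Lemma wt_weaken_ctx G X (P : term Sigma) t : wt G X P t ->
  forall G', (forall Y s, lookup Y G = Some s -> lookup Y G' = Some s) -> wt G' X P t.
Proof.
  induction 1; intros G' HG; econstructor; eauto.
  apply IHwt. intros Z s. simpl. destruct (Nat.eqb Z Y); auto.
Qed.

Lemma wt_weaken_vars G X (P : term Sigma) t : wt G X P t ->
  forall X', incl X X' -> wt G X' P t.
Proof.
  induction 1; intros X' HX; econstructor; eauto.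
  apply IHwt. apply incl_app_app; auto. apply incl_refl.
Qed.

Lemma wt_of_closed G X (R : term Sigma) t : closed R t -> wt G X R t.
Proof.
  intros H. eapply wt_weaken_vars; [eapply wt_weaken_ctx; [exact H|]|].
  - simpl; discriminate.
  - intros x [].
Qed.

Lemma wt_sort_unique G X (P : term Sigma) t : wt G X P t ->
  forall X' t', wt G X' P t' -> t = t'.
Proof.
  induction 1; intros X' t' H'; inversion H'; subst; auto.
  - congruence.
  - apply IHwt1 in H5. apply IHwt2 in H7. congruence.
  - apply IHwt1 in H5. apply IHwt2 in H7. congruence.
  - eauto.
Qed.

Lemma wt_psub G X (P : term Sigma) t : wt G X P t ->
  forall Y R tau G', lookup Y G = Some tau -> closed R tau ->
  (forall Z s, Z <> Y -> lookup Z G = Some s -> lookup Z G' = Some s) ->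
  wt G' X (psub Y R P) t.
Proof.
  induction 1 as [G X Y tau HY| | |G X Y P tau HP IH| |];
    intros Y0 R0 tau0 G' HY0 HR HG; simpl; try (econstructor; eauto; fail).
  - destruct (Nat.eqb_spec Y Y0) as [->|NE].
    + rewrite HY0 in HY. injection HY as <-. now apply wt_of_closed.
    + constructor. auto.
  - destruct (Nat.eqb_spec Y Y0) as [->|NE]; constructor.
    + eapply wt_weaken_ctx; [exact HP|].
      intros Z s. simpl. destruct (Nat.eqb_spec Z Y0); auto.
    + eapply IH; eauto.
      * simpl. destruct (Nat.eqb_spec Y0 Y); [congruence|auto].
      * intros Z s HZ. simpl. destruct (Nat.eqb Z Y); auto.
Qed.

Lemma wt_ssub G X (P : term Sigma) t : wt G X P t ->
  forall s X', (forall x, In x X -> s x = None -> In x X') -> wt G X' (ssub s P) t.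
Proof.
  induction 1 as [| | | |G X u v P Hdisj Hfr HP IH|]; intros s X' HX; simpl;
    try (econstructor; eauto; fail).
  set (s' := fun x => if memb x (bd u v) then None else s x).
  assert (Hbd : bd (map (asub s') u) (map (asub s') v) = bd u v).
  { unfold bd. rewrite <- !map_app. apply bd_asub. }
  assert (Hfr' : forall x, In x (fr (map (asub s') u) (map (asub s') v)) ->
            In x (fr u v) /\ s' x = None).
  { intros x Hx. unfold fr in Hx. rewrite <- map_app in Hx. now apply fr_asub. }
  replace (length u, length v)
    with (length (map (asub s') u), length (map (asub s') v)) by now rewrite !length_map.
  apply wt_pre.
  - intros x Hx. rewrite Hbd. apply Hdisj. now apply Hfr'.
  - intros x Hx. apply Hfr' in Hx as [Hx Hs]. apply HX; auto.
    unfold s' in Hs. destruct (memb x (bd u v)) eqn:E; auto.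
    apply memb_In in E. exfalso; eapply Hdisj; eauto.
  - rewrite Hbd, !length_map. apply IH.
    intros x Hx Hs. apply in_app_or in Hx as [Hx|Hx]; apply in_or_app; auto.
    unfold s' in Hs. destruct (memb x (bd u v)) eqn:E; auto.
    left; now apply memb_In.
Qed.

Lemma step_sorts (P : term Sigma) a b Q : step P a b Q -> forall k l, closed P (k, l) ->
  closed Q (k, l) /\ length a = k /\ length b = l.
Proof.
  induction 1 as [P k l HP|P R Q i j a b _ _ _ IH1 _ IH2|P R Q i j a b _ _ _ IH1 _ IH2
                 |P Q R S a b c _ IH1 _ IH2|P Q R S a b c d _ IH1 _ IH2|u v P sg
                 |Y tau P a b Q _ IH|P Q R S i j _ _ _ IH1 _ IH2|P Q R a b _ IH _
                 |P Q R a b _ IH _];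
    intros k0 l0 HC.
  - pose proof (wt_sort_unique HP HC) as E. injection E as <- <-.
    unfold iotas. now rewrite !repeat_length.
  - apply IH2. now apply (IH1 _ _ HC).
  - destruct (IH1 _ _ HC) as [HR Hab]. split; [now apply (IH2 _ _ HR)|exact Hab].
  - inversion HC as [| ? ? ? ? ? ? ? HP HR| | | |]; subst.
    destruct (IH1 _ _ HP) as [? [? ?]], (IH2 _ _ HR) as [? [? ?]]; subst.
    split; auto. econstructor; eauto.
  - inversion HC as [| |? ? ? ? ? ? ? ? HP HR| | |]; subst.
    destruct (IH1 _ _ HP) as [? [? ?]], (IH2 _ _ HR) as [? [? ?]]; subst.
    rewrite !length_app. split; auto. econstructor; eauto.
  - inversion HC as [| | | |? ? ? ? ? _ _ HP|]; subst.
    unfold inst. rewrite !length_map. split; [|split; reflexivity].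
    unfold restr, closed. eapply wt_ssub; [exact HP|].
    intros x Hx Hs. rewrite app_nil_r in Hx. apply memb_In in Hx. now rewrite Hx in Hs.
  - inversion HC as [| | |? ? ? ? ? HP| |]; subst. apply IH.
    eapply wt_psub; [exact HP| |exact HC|].
    + simpl. now rewrite Nat.eqb_refl.
    + intros Z s HZ Hs. simpl in Hs. destruct (Nat.eqb_spec Z Y); [congruence|discriminate].
  - inversion HC as [| | | | |? ? ? ? ? HP HR]; subst.
    destruct (IH1 _ _ HP) as [? [? ?]], (IH2 _ _ HR) as [? [? ?]].
    split; auto. now constructor.
  - inversion HC; subst. eauto.
  - inversion HC; subst. eauto.
Qed.

Lemma all_iota_iotas (w : word Sigma) : all_iota w -> w = iotas Sigma (length w).
Proof.
  induction 1 as [|x w Hx _ IH]; simpl; auto.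
  subst. unfold iotas in *. simpl. now f_equal.
Qed.

Lemma idle_step_iotas (P : term Sigma) i j R k l : closed P (k, l) ->
  all_iota i -> all_iota j -> step P i j R -> i = iotas Sigma k /\ j = iotas Sigma l.
Proof.
  intros HP Hi Hj HPR. destruct (step_sorts HPR HP) as [_ [<- <-]].
  split; now apply all_iota_iotas.
Qed.

Section Seq.
Variables k l m : nat.

Definition idle_step (PQ : term Sigma * term Sigma) (d : word Sigma)
    (PQ' : term Sigma * term Sigma) : Prop :=
  length d = l /\ step (fst PQ) (iotas Sigma k) d (fst PQ') /\
  step (snd PQ) d (iotas Sigma m) (snd PQ').

Definition idle_path := labelled_path idle_step.

Definition seq_decomp (P Q : term Sigma) (a b : word Sigma) (P' Q' : term Sigma) : Prop :=
  exists Pn Qn P0 Q0 (c : word Sigma),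
    idle_path (P, Q) (Pn, Qn) /\ length c = l /\
    step Pn a c P0 /\ step Qn c b Q0 /\ idle_path (P0, Q0) (P', Q').

Lemma seq_decomp_idle_path P Q P' Q' :
  seq_decomp P Q (iotas Sigma k) (iotas Sigma m) P' Q' -> idle_path (P, Q) (P', Q').
Proof.
  intros [Pn [Qn [P0 [Q0 [c [C1 [Hc [S1 [S2 C2]]]]]]]]].
  eapply lpath_trans; [exact C1|].
  eapply lpath_step with (y := (P0, Q0)); [|exact C2].
  exact (conj Hc (conj S1 S2)).
Qed.

Lemma seq_decomp_idle_l P Q P1 Q1 a b P' Q' :
  seq_decomp P Q (iotas Sigma k) (iotas Sigma m) P1 Q1 ->
  seq_decomp P1 Q1 a b P' Q' -> seq_decomp P Q a b P' Q'.
Proof.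
  intros H1 [Pn [Qn [P0 [Q0 [c [C1 rest]]]]]].
  exists Pn, Qn, P0, Q0, c. split; [|exact rest].
  eapply lpath_trans; [|exact C1]. now apply seq_decomp_idle_path.
Qed.

Lemma seq_decomp_idle_r P Q P1 Q1 a b P' Q' :
  seq_decomp P Q a b P1 Q1 ->
  seq_decomp P1 Q1 (iotas Sigma k) (iotas Sigma m) P' Q' -> seq_decomp P Q a b P' Q'.
Proof.
  intros [Pn [Qn [P0 [Q0 [c [C1 [Hc [S1 [S2 C2]]]]]]]]] H2.
  exists Pn, Qn, P0, Q0, c. repeat split; try assumption.
  eapply lpath_trans; [exact C2|]. now apply seq_decomp_idle_path.
Qed.

Lemma step_seq_decomp X a b R : step X a b R ->
  forall P Q, X = TSeq P Q -> closed P (k, l) -> closed Q (l, m) ->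
  exists P' Q', R = TSeq P' Q' /\ closed P' (k, l) /\ closed Q' (l, m) /\
    seq_decomp P Q a b P' Q'.
Proof.
  induction 1 as [X k' m' HX|X R0 R i j a b Hi Hj HXR IH1 _ IH2
                 |X R0 R i j a b Hi Hj _ IH1 HR IH2|P0 P' Q0 Q' a b c HP' _ HQ' _| | | | | |];
    try (intros ? ? EX; discriminate EX); intros P Q EX HP HQ.
  - subst. inversion HX as [| ? ? ? ? ? ? ? HP0 HQ0| | | |]; subst.
    pose proof (wt_sort_unique HP HP0) as E1. injection E1 as <- <-.
    pose proof (wt_sort_unique HQ HQ0) as E2. injection E2 as <-.
    exists P, Q. repeat split; auto.
    exists P, Q, P, Q, (iotas Sigma l). repeat split; try constructor; auto.
    unfold iotas; apply repeat_length.
  - subst. assert (HX : closed (TSeq P Q) (k, m)) by (econstructor; eauto).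
    destruct (idle_step_iotas HX Hi Hj HXR); subst.
    destruct (IH1 P Q eq_refl HP HQ) as [P1 [Q1 [-> [HP1 [HQ1 D1]]]]].
    destruct (IH2 P1 Q1 eq_refl HP1 HQ1) as [P' [Q' [-> [HP' [HQ' D2]]]]].
    exists P', Q'. repeat split; auto. eapply seq_decomp_idle_l; eauto.
  - subst. destruct (IH1 P Q eq_refl HP HQ) as [P1 [Q1 [-> [HP1 [HQ1 D1]]]]].
    assert (HX1 : closed (TSeq P1 Q1) (k, m)) by (econstructor; eauto).
    destruct (idle_step_iotas HX1 Hi Hj HR); subst.
    destruct (IH2 P1 Q1 eq_refl HP1 HQ1) as [P' [Q' [-> [HP' [HQ' D2]]]]].
    exists P', Q'. repeat split; auto. eapply seq_decomp_idle_r; eauto.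
  - injection EX as -> ->.
    destruct (step_sorts HP' HP) as [HP'c [_ Hc]].
    destruct (step_sorts HQ' HQ) as [HQ'c _]; subst.
    exists P', Q'. repeat split; auto.
    exists P, Q, P', Q', c. repeat split; auto; constructor.
Qed.

End Seq.

Lemma step_ten_decomp X a b R : step X a b R -> forall P Q, X = TTen P Q ->
  exists P' Q', R = TTen P' Q' /\
    exists a1 a2 b1 b2 : word Sigma,
      step P a1 b1 P' /\ step Q a2 b2 Q' /\ a = a1 ++ a2 /\ b = b1 ++ b2.
Proof.
  induction 1 as [X k' l' HX|X R0 R i j a b Hi Hj _ IH1 _ IH2
                 |X R0 R i j a b Hi Hj _ IH1 _ IH2| |P0 P' Q0 Q' a b c d HP' _ HQ' _| | | | |];
    try (intros ? ? EX; discriminate EX); intros P Q EX.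
  - subst. inversion HX as [| |? ? ? ? k l m n HP HQ| | |]; subst.
    exists P, Q. split; auto.
    exists (iotas Sigma k), (iotas Sigma m), (iotas Sigma l), (iotas Sigma n).
    repeat split; try (constructor; assumption); unfold iotas; now rewrite repeat_app.
  - destruct (IH1 P Q EX) as [P1 [Q1 [-> [a1 [a2 [b1 [b2 [S1 [S2 [-> ->]]]]]]]]]].
    destruct (IH2 P1 Q1 eq_refl) as [P' [Q' [-> [c1 [c2 [d1 [d2 [T1 [T2 [-> ->]]]]]]]]]].
    apply Forall_app in Hi as [Ha1 Ha2]. apply Forall_app in Hj as [Hb1 Hb2].
    exists P', Q'. split; auto. exists c1, c2, d1, d2.
    split; [|split]; auto.
    + exact (st_iotaL Ha1 Hb1 S1 T1).
    + exact (st_iotaL Ha2 Hb2 S2 T2).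
  - destruct (IH1 P Q EX) as [P1 [Q1 [-> [a1 [a2 [b1 [b2 [S1 [S2 [-> ->]]]]]]]]]].
    destruct (IH2 P1 Q1 eq_refl) as [P' [Q' [-> [c1 [c2 [d1 [d2 [T1 [T2 [-> ->]]]]]]]]]].
    apply Forall_app in Hi as [Ha1 Ha2]. apply Forall_app in Hj as [Hb1 Hb2].
    exists P', Q'. split; auto. exists a1, a2, b1, b2.
    split; [|split]; auto.
    + exact (st_iotaR Ha1 Hb1 S1 T1).
    + exact (st_iotaR Ha2 Hb2 S2 T2).
  - injection EX as -> ->. exists P', Q'. split; auto. exists a, c, b, d. auto.
Qed.

End Wire.

Theorem mainTheorem2 (Sigma : Type) (P Q : term Sigma) (k l m : nat) :
  closed P (k, l) -> closed Q (l, m) ->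
  (* (i) *)
  (forall (a b : word Sigma) (R : term Sigma),
     step (TSeq P Q) a b R ->
     exists P' Q', R = TSeq P' Q' /\
     exists (n p : nat) (d : nat -> word Sigma) (c : word Sigma) (e : nat -> word Sigma)
            (Ps Qs Ps' Qs' : nat -> term Sigma),
       Ps 0 = P /\ Qs 0 = Q /\ Ps' p = P' /\ Qs' p = Q' /\
       (forall i, 1 <= i <= n ->
          length (d i) = l /\
          step (Ps (i - 1)) (iotas Sigma k) (d i) (Ps i) /\
          step (Qs (i - 1)) (d i) (iotas Sigma m) (Qs i)) /\
       length c = l /\
       step (Ps n) a c (Ps' 0) /\ step (Qs n) c b (Qs' 0) /\
       (forall j, 1 <= j <= p ->
          length (e j) = l /\
          step (Ps' (j - 1)) (iotas Sigma k) (e j) (Ps' j) /\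
          step (Qs' (j - 1)) (e j) (iotas Sigma m) (Qs' j))) /\
  (* (ii) *)
  (forall (a b : word Sigma) (R : term Sigma),
     step (TTen P Q) a b R ->
     exists P' Q', R = TTen P' Q' /\
     exists a1 a2 b1 b2 : word Sigma,
       step P a1 b1 P' /\ step Q a2 b2 Q' /\ a = a1 ++ a2 /\ b = b1 ++ b2).
Proof.
  intros HP HQ. split; [|intros a b R H; exact (step_ten_decomp H eq_refl)].
  intros a b R H.
  destruct (step_seq_decomp H eq_refl HP HQ)
    as [P' [Q' [-> [_ [_ [Pn [Qn [P0 [Q0 [c [C1 [Hc [S1 [S2 C2]]]]]]]]]]]]]].
  exists P', Q'. split; [reflexivity|].
  destruct (lpath_indexed [] C1) as [n [d [PQs [E0 [En Hd]]]]].
  destruct (lpath_indexed [] C2) as [p [e [PQs' [F0 [Fp He]]]]].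
  exists n, p, d, c, e, (fun i => fst (PQs i)), (fun i => snd (PQs i)),
    (fun j => fst (PQs' j)), (fun j => snd (PQs' j)).
  rewrite En, F0.
  exact (conj (f_equal fst E0) (conj (f_equal snd E0) (conj (f_equal fst Fp)
          (conj (f_equal snd Fp) (conj Hd (conj Hc (conj S1 (conj S2 He)))))))).
Qed.
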